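(* Let $U_1$ be a vector space concentrated in degree 1, $U$ the universal Lie superalgebra associated to $U_1$, $G$ a Lie superalgebra with $G_1=U_1$, and $\rho:G_{1-}\to U_{1-}$ the map defined by $\rho(u)=u$ for $u\in G_1$ and $\rho(x)(u)=\rho([x,u])$ for $x\in G_{0-}$, $u\in U_1$. Then $\rho(G_{0-})$ is a subalgebra of $U_{0-}$. If moreover $G$ is positively $0$-transitive and $G_+$ is generated by $G_1$, then $\rho$ restricts to a Lie superalgebra isomorphism $G_{0-}\to\rho(G_{0-})$.
   Context: All vector spaces are over $\mathbb{K}=\mathbb{R}$ or $\mathbb{C}$, $\mathbb{Z}$-graded, parity equal to degree mod 2. A Lie superalgebra is a graded space with degree-preserving bracket satisfying graded antisymmetry and graded Jacobi. $G_\pm=\bigoplus_{k\ge1}G_{\pm k}$, $G_{p-}=\bigoplus_{k\le p}G_k$. $G$ is positively $0$-transitive if for $x\in G_{0-}$, $[G_+,x]=0$ implies $x=0$. Universal Lie superalgebra: for $U_1$ concentrated in degree 1 (odd), put $U_0=\mathrm{End}(U_1)$, $U_{-p+1}=\mathrm{Hom}(U_1,U_{-p+2})$ for $p\ge2$; on $U_{1-}=\bigoplus_{k\le1}U_k$ define brackets recursively by $[x,u]=x(u)$, $[u,x]=-(-1)^{|x|}x(u)$, $[x,y](u)=[x,y(u)]+(-1)^{|y|}[x(u),y]$ ($x,y\in U_{0-}$, $u\in U_1$), giving a semilocal Lie superalgebra; $U$ is the unique Lie superalgebra extending it such that $U_+$ is the free Lie superalgebra generated by $U_1$. *)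

From mathcomp Require Import all_boot all_algebra zify.
Set Implicit Arguments. Unset Strict Implicit. Unset Printing Implicit Defensive.
Import GRing.Theory.
Local Open Scope ring_scope.

Definition sgn (K : nzRingType) (b : bool) : K := (-1) ^+ b.

Definition par (i : int) : bool := odd `|i|%N.

Definition castG (K : nzRingType) (G : int -> lmodType K) (i j : int)
  (e : i = j) (x : G i) : G j := eq_rect i (fun k => G k) x j e.

Definition is_lie_superalgebra (K : nzRingType) (G : int -> lmodType K)
  (br : forall i j : int, G i -> G j -> G (i + j)) : Prop :=
  [/\
      (forall (i j : int) (a : K) (x x' : G i) (y : G j),
          br i j (a *: x + x') y = a *: br i j x y + br i j x' y),
      (forall (i j : int) (a : K) (x : G i) (y y' : G j),
          br i j x (a *: y + y') = a *: br i j x y + br i j x y'),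
      (forall (i j : int) (x : G i) (y : G j),
          br i j x y = - (sgn K (par i && par j) *: castG (addrC j i) (br j i y x))) &
      (forall (i j k : int) (x : G i) (y : G j) (z : G k),
          br i (j + k) x (br j k y z) =
          castG (esym (addrA i j k)) (br (i + j) k (br i j x y) z)
          + sgn K (par i && par j) *: castG (addrCA j i k) (br j (i + k) y (br i k x z)))].

Inductive genG1 (K : nzRingType) (G : int -> lmodType K)
  (br : forall i j : int, G i -> G j -> G (i + j)) : forall k : int, G k -> Prop :=
  | genG1_gen (u : G 1) : genG1 br u
  | genG1_0 (k : int) : genG1 br (0 : G k)
  | genG1_add (k : int) (x y : G k) : genG1 br x -> genG1 br y -> genG1 br (x + y)
  | genG1_scale (k : int) (a : K) (x : G k) : genG1 br x -> genG1 br (a *: x)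
  | genG1_br (i j : int) (x : G i) (y : G j) :
      genG1 br x -> genG1 br y -> genG1 br (br i j x y).

Definition plus_generated_by_G1 (K : nzRingType) (G : int -> lmodType K)
  (br : forall i j : int, G i -> G j -> G (i + j)) : Prop :=
  forall (k : int), 0 < k -> forall x : G k, genG1 br x.

(* Positively 0-transitive (stated on homogeneous elements of G_{0-}; *)
(* equivalent to the condition on all of G_{0-} by the grading).       *)
Definition pos_0_transitive (K : nzRingType) (G : int -> lmodType K)
  (br : forall i j : int, G i -> G j -> G (i + j)) : Prop :=
  forall (k : int), k <= 0 -> forall x : G k,
    (forall (j : int), 0 < j -> forall y : G j, br j k y x = 0) -> x = 0.

(* The nonpositive part U_{1-} of the universal Lie superalgebra.       *)
(* Wt V p is the ambient function space for U_{1-p}:                    *)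
(*   Wt V 0 = U_1 = V,  Wt V (p+1) = (V -> Wt V p);                      *)
(* U_{1-p} is the subset of those elements satisfying isHom (i.e.       *)
(* U_0 = End(U_1), U_{-p+1} = Hom(U_1, U_{-p+2})).                      *)

Fixpoint Wt (K : nzRingType) (V : lmodType K) (p : nat) : Type :=
  match p with
  | 0 => V
  | p'.+1 => V -> Wt V p'
  end.

Fixpoint wadd (K : nzRingType) (V : lmodType K) (p : nat) : Wt V p -> Wt V p -> Wt V p :=
  match p return Wt V p -> Wt V p -> Wt V p with
  | 0 => fun x y => x + y
  | p'.+1 => fun f g u => wadd (f u) (g u)
  end.

Fixpoint wscale (K : nzRingType) (V : lmodType K) (p : nat) (a : K) : Wt V p -> Wt V p :=
  match p return Wt V p -> Wt V p with
  | 0 => fun x => a *: x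
  | p'.+1 => fun f u => wscale a (f u)
  end.

Fixpoint isHom (K : nzRingType) (V : lmodType K) (p : nat) : Wt V p -> Prop :=
  match p return Wt V p -> Prop with
  | 0 => fun _ => True
  | p'.+1 => fun f =>
      (forall (a : K) (u v : V), f (a *: u + v) = wadd (wscale a (f u)) (f v))
      /\ (forall u : V, isHom (f u))
  end.

Definition castW (K : nzRingType) (V : lmodType K) (m n : nat) (e : m = n)
  (x : Wt V m) : Wt V n := eq_rect m (fun k => Wt V k) x n e.

(* Bracket of U_{1-} on degrees <= 0:  x in U_{-p}, y in U_{-q}        *)
(* (i.e. in Wt (p+1), Wt (q+1)) gives [x,y] in U_{-(p+q)}, with           *)
(*   [x,y](u) = [x, y(u)] + (-1)^{|y|} [x(u), y],   |y| = q mod 2,       *)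
(* where [x, v] = x(v) and [v, y] = -(-1)^{|y|} y(v) for v in U_1.       *)
Fixpoint brU (K : nzRingType) (V : lmodType K) (p : nat) {struct p} :
  forall q : nat, Wt V p.+1 -> Wt V q.+1 -> Wt V (p + q).+1 :=
  fix brU_in (q : nat) {struct q} : Wt V p.+1 -> Wt V q.+1 -> Wt V (p + q).+1 :=
    fun x y u =>
      wadd
        (
         match q return Wt V q.+1 -> Wt V (p + q) with
         | 0 => fun y0 => castW (esym (addn0 p)) (x (y0 u))
         | q'.+1 => fun y0 => castW (esym (addnS p q')) (brU_in q' x (y0 u))
         end y)
        (wscale (sgn K (odd q))
          (
           match p return Wt V p.+1 -> Wt V (p + q) with
           | 0 => fun x0 => wscale (- sgn K (odd q)) (y (x0 u))
           | p'.+1 => fun x0 => @brU K V p' q (x0 u) y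
           end x)).

Lemma deg0 : (1 - (0%N)%:Z = 1)%R.
Proof. by rewrite subr0. Qed.

Lemma degS (p : nat) : ((1 - (p.+1)%:Z) + 1 = 1 - p%:Z)%R.
Proof. lia. Qed.

Fixpoint rhoG (K : nzRingType) (G : int -> lmodType K)
  (br : forall i j : int, G i -> G j -> G (i + j)) (p : nat) :
  G (1 - p%:Z) -> Wt (G 1) p :=
  match p return G (1 - p%:Z) -> Wt (G 1) p with
  | 0 => fun x => castG deg0 x
  | p'.+1 => fun x u => @rhoG K G br p' (castG (degS p') (br _ _ x u))
  end.

Lemma deg_br (p q : nat) :
  ((1 - (p.+1)%:Z) + (1 - (q.+1)%:Z) = 1 - ((p + q).+1)%:Z)%R.
Proof. lia. Qed.

Arguments rhoG {K G} br p _.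
Arguments brU {K V} p q _ _.

(* rho preserves brackets: evaluating rho [x, y] at u in G_1 and using Jacobi,
   [[x, y], u] splits into [x, [y, u]] and [y, [x, u]], whose images are, by
   induction on the degrees, exactly the two terms of the recursive definition
   of the bracket of U. So rho(G_{0-}) is the image of a bracket morphism.
   For injectivity, rho x = rho y gives rho [x, u] = rho [y, u], hence by
   induction [x - y, u] = 0 for all u in G_1; by Jacobi x - y then commutes
   with the subalgebra generated by G_1, which is G_+, and positive
   0-transitivity forces x = y. *)
From mathcomp Require Import all_boot all_algebra zify.
From Stdlib Require Import FunctionalExtensionality.
Set Implicit Arguments. Unset Strict Implicit. Unset Printing Implicit Defensive.
Import GRing.Theory.
Local Open Scope ring_scope.

Section WtOperations.
Variables (K : nzRingType) (V : lmodType K).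

Fixpoint wzero (p : nat) : Wt V p :=
  match p return Wt V p with 0 => 0 | p'.+1 => fun _ => wzero p' end.

Lemma waddC p (w1 w2 : Wt V p) : wadd w1 w2 = wadd w2 w1.
Proof.
elim: p w1 w2 => [|p IH] w1 w2 /=; first by rewrite addrC.
by apply: functional_extensionality => u; rewrite IH.
Qed.

Lemma wscalerA p a b (w : Wt V p) : wscale a (wscale b w) = wscale (a * b) w.
Proof.
elim: p w => [|p IH] w /=; first by rewrite scalerA.
by apply: functional_extensionality => u; rewrite IH.
Qed.

Lemma waddr0 p (w : Wt V p) : wadd w (wzero p) = w.
Proof.
elim: p w => [|p IH] w /=; first by rewrite addr0.
by apply: functional_extensionality => u; rewrite IH.
Qed.

Lemma brU00 (X Y : Wt V 1) u : brU 0 0 X Y u =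
  wadd (castW (esym (addn0 0)) (X (Y u)))
       (wscale (sgn K (odd 0)) (wscale (- sgn K (odd 0)) (Y (X u) : Wt V 0))).
Proof. by []. Qed.

Lemma brU0S q (X : Wt V 1) (Y : Wt V q.+2) u : brU 0 q.+1 X Y u =
  wadd (castW (esym (addnS 0 q)) (brU 0 q X (Y u)))
       (wscale (sgn K (odd q.+1)) (wscale (- sgn K (odd q.+1)) (Y (X u) : Wt V q.+1))).
Proof. by []. Qed.

Lemma brUS0 p (X : Wt V p.+2) (Y : Wt V 1) u : brU p.+1 0 X Y u =
  wadd (castW (esym (addn0 p.+1)) (X (Y u)))
       (wscale (sgn K (odd 0)) (brU p 0 (X u) Y)).
Proof. by []. Qed.

Lemma brUSS p q (X : Wt V p.+2) (Y : Wt V q.+2) u : brU p.+1 q.+1 X Y u =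
  wadd (castW (esym (addnS p.+1 q)) (brU p.+1 q X (Y u)))
       (wscale (sgn K (odd q.+1)) (brU p q.+1 (X u) Y)).
Proof. by []. Qed.

End WtOperations.

Section Signs.
Variable K : nzRingType.

Lemma sgnT : sgn K true = -1. Proof. by rewrite /sgn expr1. Qed.
Lemma sgnF : sgn K false = 1. Proof. by rewrite /sgn expr0. Qed.

Lemma mulr_sgnN c : sgn K c * - sgn K c = -1.
Proof. by case: c; rewrite ?sgnT ?sgnF ?mulrN ?mulr1 ?mulrNN ?mulN1r ?opprK. Qed.

Lemma mulNsgn_and b c : (- sgn K (b && c)) * (- sgn K (c && ~~ b)) = sgn K c.
Proof. by case: b; case: c; rewrite /= ?sgnT ?sgnF ?mulrNN ?mulr1 ?mul1r ?opprK. Qed.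

Lemma par_1subS n : par (1 - (n.+1)%:Z) = odd n.
Proof. have -> : 1 - (n.+1)%:Z = - (n%:Z) by lia. by rewrite /par abszN absz_nat. Qed.

Lemma par_1subSD1 n : par ((1 - (n.+1)%:Z) + 1) = ~~ odd n.
Proof.
rewrite degS; case: n => [|m] //.
have -> : 1 - (m.+1)%:Z = - (m%:Z) by lia.
by rewrite /par abszN absz_nat /= negbK.
Qed.

End Signs.

Section Casts.
Variables (K : nzRingType) (G : int -> lmodType K).

Lemma castG_comp i j k (e1 : i = j) (e2 : j = k) (x : G i) :
  castG e2 (castG e1 x) = castG (etrans e1 e2) x.
Proof. by case: k / e2. Qed.

Lemma castG_id i (e : i = i) (x : G i) : castG e x = x.
Proof. by rewrite (eq_irrelevance e erefl). Qed.

Lemma castG_inj i j (e : i = j) : injective (@castG K G i j e).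
Proof. by case: j / e. Qed.

Lemma castGL i j (e : i = j) a (x y : G i) :
  castG e (a *: x + y) = a *: castG e x + castG e y.
Proof. by case: j / e. Qed.

Lemma castGD i j (e : i = j) (x y : G i) : castG e (x + y) = castG e x + castG e y.
Proof. by case: j / e. Qed.

Lemma castGZ i j (e : i = j) a (x : G i) : castG e (a *: x) = a *: castG e x.
Proof. by case: j / e. Qed.

Lemma castGN i j (e : i = j) (x : G i) : castG e (- x) = - castG e x.
Proof. by case: j / e. Qed.

Lemma castG0 i j (e : i = j) : castG e (0 : G i) = 0.
Proof. by case: j / e. Qed.

Variable br : forall i j : int, G i -> G j -> G (i + j).

Lemma castG_brl i i' j (e : i = i') (x : G i) (y : G j) :
  br (castG e x) y = castG (f_equal (fun t => t + j) e) (br x y).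
Proof. by case: i' / e. Qed.

Lemma castG_brr i j j' (e : j = j') (x : G i) (y : G j) :
  br x (castG e y) = castG (f_equal (fun t => i + t) e) (br x y).
Proof. by case: j' / e. Qed.

Lemma rhoG_castG n m (en : n = m) i (z : G i) (e : i = 1 - m%:Z) (e' : i = 1 - n%:Z) :
  rhoG br m (castG e z) = castW en (rhoG br n (castG e' z)).
Proof. by case: m / en e => e /=; rewrite (eq_irrelevance e e'). Qed.

End Casts.

Section LieSuperalgebra.
Variables (K : nzRingType) (G : int -> lmodType K).
Variable br : forall i j : int, G i -> G j -> G (i + j).
Hypothesis HG : is_lie_superalgebra br.

Lemma br_linearl i j a (x x' : G i) (y : G j) : br (a *: x + x') y = a *: br x y + br x' y.
Proof. by case: HG. Qed.

Lemma br_linearr i j a (x : G i) (y y' : G j) : br x (a *: y + y') = a *: br x y + br x y'.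
Proof. by case: HG => _ H _ _; apply: H. Qed.

Lemma br_antisym i j (x : G i) (y : G j) :
  br x y = - (sgn K (par i && par j) *: castG (addrC j i) (br y x)).
Proof. by case: HG => _ _ H _; apply: H. Qed.

Lemma br_jacobi i j k (x : G i) (y : G j) (z : G k) :
  br x (br y z) = castG (esym (addrA i j k)) (br (br x y) z)
          + sgn K (par i && par j) *: castG (addrCA j i k) (br y (br x z)).
Proof. by case: HG => _ _ _ H; apply: H. Qed.

Lemma br_jacobil i j k (x : G i) (y : G j) (z : G k) :
  br (br x y) z = (- sgn K (par i && par j)) *:
     castG (etrans (addrCA j i k) (addrA i j k)) (br y (br x z))
   + castG (addrA i j k) (br x (br y z)).
Proof.
rewrite (br_jacobi x y z) castGD castGZ !castG_comp castG_id.
move: (castG _ _) (br (br x y) z) => Y W.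
by rewrite scaleNr addrCA addNr addr0.
Qed.

Lemma br0l i j (y : G j) : br (0 : G i) y = 0.
Proof.
have := br_linearl 1 (0 : G i) 0 y.
rewrite !scale1r addr0 -{1}(addr0 (br (0 : G i) y)).
by move/addrI/esym.
Qed.

Lemma br0r i j (x : G i) : br x (0 : G j) = 0.
Proof.
have := br_linearr 1 x (0 : G j) 0.
rewrite !scale1r addr0 -{1}(addr0 (br x (0 : G j))).
by move/addrI/esym.
Qed.

Lemma rhoG_linear p a (x y : G (1 - p%:Z)) :
  rhoG br p (a *: x + y) = wadd (wscale a (rhoG br p x)) (rhoG br p y).
Proof.
elim: p a x y => [|p IH] a x y /=; first by rewrite castGL.
by apply: functional_extensionality => u; rewrite br_linearl castGL IH.
Qed.

Lemma rhoG0 p : rhoG br p 0 = wzero (G 1) p.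
Proof.
elim: p => [|p IH] /=; first by rewrite castG0.
by apply: functional_extensionality => u; rewrite br0l castG0 IH.
Qed.

Lemma rhoGZ p a (x : G (1 - p%:Z)) : rhoG br p (a *: x) = wscale a (rhoG br p x).
Proof. by rewrite -[a *: x]addr0 rhoG_linear rhoG0 waddr0. Qed.

Lemma rhoG_isHom p (x : G (1 - p%:Z)) : isHom (rhoG br p x).
Proof.
elim: p x => [|p IH] x //=; split => [a u v|u]; last exact: IH.
by rewrite br_linearr castGL rhoG_linear.
Qed.

Lemma rhoG_br_apply p q (x : G (1 - (p.+1)%:Z)) (y : G (1 - (q.+1)%:Z))
  (e : (1 - (p.+1)%:Z) + (1 - (q.+1)%:Z) = 1 - ((p + q).+1)%:Z) (u : G 1) :
 exists (exy : (1 - (p.+1)%:Z) + ((1 - (q.+1)%:Z) + 1) = 1 - (p + q)%:Z)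
        (eyx : (1 - (q.+1)%:Z) + ((1 - (p.+1)%:Z) + 1) = 1 - (p + q)%:Z),
 rhoG br (p + q).+1 (castG e (br x y)) u =
   wadd (wscale (- sgn K (par (1 - (p.+1)%:Z) && par (1 - (q.+1)%:Z)))
                (rhoG br (p + q) (castG eyx (br y (br x u)))))
        (rhoG br (p + q) (castG exy (br x (br y u)))).
Proof.
rewrite /= castG_brl castG_comp br_jacobil castGL !castG_comp rhoG_linear.
by eexists _, _.
Qed.

Lemma rhoG_br_br_deg0r p (x : G (1 - (p.+1)%:Z)) (y : G (1 - (0.+1)%:Z)) (u : G 1)
  (e : (1 - (p.+1)%:Z) + ((1 - (0.+1)%:Z) + 1) = 1 - (p + 0)%:Z) :
  rhoG br (p + 0) (castG e (br x (br y u)))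
  = castW (esym (addn0 p)) (rhoG br p.+1 x (rhoG br 1 y u)).
Proof. by rewrite /= castG_comp castG_brr castG_comp; exact: rhoG_castG. Qed.

Lemma rhoG_br_br_deg0l q (x : G (1 - (0.+1)%:Z)) (y : G (1 - (q.+1)%:Z)) (u : G 1)
  (e : (1 - (q.+1)%:Z) + ((1 - (0.+1)%:Z) + 1) = 1 - (0 + q)%:Z) :
  rhoG br (0 + q) (castG e (br y (br x u))) = rhoG br q.+1 y (rhoG br 1 x u).
Proof. by rewrite /= castG_comp castG_brr castG_comp; exact: (rhoG_castG _ erefl). Qed.

Lemma rhoG_br_br_negr p q (x : G (1 - (p.+1)%:Z)) (y : G (1 - (q.+2)%:Z)) (u : G 1)
  (IH : forall (y' : G (1 - (q.+1)%:Z)) e, rhoG br (p + q).+1 (castG e (br x y'))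
          = brU p q (rhoG br p.+1 x) (rhoG br q.+1 y'))
  (e : (1 - (p.+1)%:Z) + ((1 - (q.+2)%:Z) + 1) = 1 - (p + q.+1)%:Z) :
  rhoG br (p + q.+1) (castG e (br x (br y u)))
  = castW (esym (addnS p q)) (brU p q (rhoG br p.+1 x) (rhoG br q.+2 y u)).
Proof.
have -> : rhoG br q.+2 y u = rhoG br q.+1 (castG (degS q.+1) (br y u)) by [].
by rewrite -(IH _ (deg_br p q)) castG_brr castG_comp; exact: rhoG_castG.
Qed.

Lemma rhoG_br_br_negl p q (x : G (1 - (p.+2)%:Z)) (y : G (1 - (q.+1)%:Z)) (u : G 1)
  (IH : forall q (x' : G (1 - (p.+1)%:Z)) (y : G (1 - (q.+1)%:Z)) e,
      rhoG br (p + q).+1 (castG e (br x' y)) = brU p q (rhoG br p.+1 x') (rhoG br q.+1 y))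
  (e : (1 - (q.+1)%:Z) + ((1 - (p.+2)%:Z) + 1) = 1 - (p.+1 + q)%:Z) :
  rhoG br (p.+1 + q) (castG e (br y (br x u)))
  = wscale (- sgn K (par (1 - (q.+1)%:Z) && par ((1 - (p.+2)%:Z) + 1)))
      (brU p q (rhoG br p.+2 x u) (rhoG br q.+1 y)).
Proof.
have -> : rhoG br p.+2 x u = rhoG br p.+1 (castG (degS p.+1) (br x u)) by [].
rewrite -(IH _ _ _ (deg_br p q)) castG_brl castG_comp.
rewrite (br_antisym y) castGN castGZ -scaleNr castG_comp rhoGZ; congr wscale.
exact: (rhoG_castG _ erefl).
Qed.

Lemma rhoG_br p q (x : G (1 - (p.+1)%:Z)) (y : G (1 - (q.+1)%:Z))
  (e : (1 - (p.+1)%:Z) + (1 - (q.+1)%:Z) = 1 - ((p + q).+1)%:Z) :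
  rhoG br (p + q).+1 (castG e (br x y)) = brU p q (rhoG br p.+1 x) (rhoG br q.+1 y).
Proof.
elim: p q x y e => [|p IHp] q; elim: q => [|q IHq] x y e;
  apply: functional_extensionality => u;
  have [exy [eyx ->]] := rhoG_br_apply x y e u.
- rewrite brU00 (rhoG_br_br_deg0r x y) (rhoG_br_br_deg0l x y).
  by rewrite waddC wscalerA mulr_sgnN !par_1subS sgnF.
- rewrite brU0S (rhoG_br_br_deg0l x y) (rhoG_br_br_negr _ _ (IHq x)).
  by rewrite waddC wscalerA mulr_sgnN !par_1subS sgnF.
- rewrite brUS0 (rhoG_br_br_deg0r x y) (rhoG_br_br_negl x y u IHp).
  by rewrite waddC wscalerA par_1subSD1 !par_1subS mulNsgn_and.
- rewrite brUSS (rhoG_br_br_negr _ _ (IHq x)) (rhoG_br_br_negl x y u IHp).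
  by rewrite waddC wscalerA par_1subSD1 !par_1subS mulNsgn_and.
Qed.

Lemma genG1_br_eq0 d (z : G d) (zG1 : forall u : G 1, br z u = 0) k (w : G k) :
  genG1 br w -> br w z = 0.
Proof.
elim => [u | k' | k' x y _ Hx _ Hy | k' a x _ Hx | i j x y _ Hx _ Hy].
- by rewrite br_antisym zG1 castG0 scaler0 oppr0.
- exact: br0l.
- by rewrite -[x]scale1r br_linearl Hx Hy scaler0 addr0.
- by rewrite -[a *: x]addr0 br_linearl Hx br0l scaler0 addr0.
- have := br_jacobi x y z; rewrite Hy Hx !br0r castG0 scaler0 addr0 => /esym.
  by rewrite -(castG0 G (esym (addrA i j d))) => /castG_inj.
Qed.

Hypotheses (G_trans : pos_0_transitive br) (G_gen : plus_generated_by_G1 br).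

Lemma brG1_inj k (x y : G k) : k <= 0 -> (forall u : G 1, br x u = br y u) -> x = y.
Proof.
move=> k_le0 xy_eq; apply/eqP; rewrite -subr_eq0; apply/eqP.
apply: G_trans => // j j_gt0 w; apply: genG1_br_eq0 (G_gen j_gt0 w) => u.
by rewrite -scaleN1r (addrC x) br_linearl xy_eq scaleN1r addNr.
Qed.

Lemma rhoG_inj p (x y : G (1 - (p.+1)%:Z)) : rhoG br p.+1 x = rhoG br p.+1 y -> x = y.
Proof.
elim: p x y => [|p IH] x y rho_eq; apply: brG1_inj => // u;
  have /= := congr1 (fun f => f u) rho_eq.
- by move=> /castG_inj /castG_inj.
- by move=> /IH /castG_inj.
Qed.

End LieSuperalgebra.

Theorem corollary3p4 (K : numFieldType) (G : int -> lmodType K)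
  (br : forall i j : int, G i -> G j -> G (i + j))
  (HG : is_lie_superalgebra br) :
  (forall (p : nat) (x : G (1 - p%:Z)), isHom (rhoG br p x)) /\
  (forall (p : nat) (a : K) (x y : G (1 - p%:Z)),
      rhoG br p (a *: x + y) = wadd (wscale a (rhoG br p x)) (rhoG br p y)) /\
  (forall (p q : nat) (x : G (1 - (p.+1)%:Z)) (y : G (1 - (q.+1)%:Z)),
      exists z : G (1 - ((p + q).+1)%:Z),
        rhoG br (p + q).+1 z = brU p q (rhoG br p.+1 x) (rhoG br q.+1 y)) /\
  (pos_0_transitive br -> plus_generated_by_G1 br ->
     (forall (p : nat) (x y : G (1 - (p.+1)%:Z)),
         rhoG br p.+1 x = rhoG br p.+1 y -> x = y) /\
     (forall (p q : nat) (x : G (1 - (p.+1)%:Z)) (y : G (1 - (q.+1)%:Z)),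
         rhoG br (p + q).+1 (castG (deg_br p q) (br _ _ x y))
         = brU p q (rhoG br p.+1 x) (rhoG br q.+1 y))).
Proof.
split; first exact: rhoG_isHom.
split; first exact: rhoG_linear.
split.
  by move=> p q x y; exists (castG (deg_br p q) (br _ _ x y)); apply: rhoG_br.
move=> G_trans G_gen; split; first exact: rhoG_inj.
by move=> p q x y; apply: rhoG_br.
Qed.
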